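(* Let $n\geq 4$ and let $X_n$ be the rack of transpositions of $\mathbb{S}_n$. Let $-1$ denote the constant rack $2$-cocycle on $X_n$ with value $-1$, and let $\chi:X_n\times X_n\to\mathbb{C}^\times$ be given, for $\sigma\in X_n$ and $\tau=(i\;j)\in X_n$ with $i<j$, by $\chi(\sigma,\tau)=1$ if $\sigma(i)<\sigma(j)$ and $\chi(\sigma,\tau)=-1$ if $\sigma(i)>\sigma(j)$. Then the rack $2$-cocycles $\chi$ and $-1$ on $X_n$ are equivalent by twist. Consequently, the Nichols algebras $\mathfrak{B}(X_n,-1)$ and $\mathfrak{B}(X_n,\chi)$ have the same Hilbert series.
   Context: A rack is a non-empty set $X$ with a map $\triangleright:X\times X\to X$ such that $y\mapsto x\triangleright y$ is bijective for all $x$ and $x\triangleright(y\triangleright z)=(x\triangleright y)\triangleright(x\triangleright z)$. $X_n$ is the set of transpositions in $\mathbb{S}_n$ with $x\triangleright y=xyx^{-1}$. A rack $2$-cocycle is a map $q:X\times X\to\mathbb{C}^\times$ with $q_{x,y\triangleright z}q_{y,z}=q_{x\triangleright y,x\triangleright z}q_{x,z}$ for all $x,y,z$. For a map $\phi:X\times X\to\mathbb{C}^\times$ define $q^\phi_{x,y}=\phi(x,y)\phi(x\triangleright y,x)^{-1}q_{x,y}$. Two rack $2$-cocycles $q,q'$ on $X$ are equivalent by twist if there exists $\phi:X\times X\to\mathbb{C}^\times$ with $q'=q^\phi$. Given a rack $2$-cocycle $q$ on a finite rack $X$, let $V=\mathbb{C}X$ with basis $X$ and braiding $c(x\otimes y)=q_{x,y}\,(x\triangleright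 y)\otimes x$; this induces a representation $\rho_m$ of the braid group $\mathbb{B}_m$ on $V^{\otimes m}$ with $\rho_m(\sigma_i)=\mathrm{id}^{\otimes(i-1)}\otimes c\otimes\mathrm{id}^{\otimes(m-i-1)}$. Let $\mu:\mathbb{S}_m\to\mathbb{B}_m$ be the Matsumoto section ($\mu((i\;i+1))=\sigma_i$, $\mu(xy)=\mu(x)\mu(y)$ when lengths add), and $Q_m=\sum_{\sigma\in\mathbb{S}_m}\rho_m(\mu(\sigma))$ for $m\ge2$. The Nichols algebra is $\mathfrak{B}(X,q)=T(V)/\bigoplus_{m\ge2}\ker Q_m$, graded by tensor degree; its Hilbert series is $\sum_{m\ge0}\dim\mathfrak{B}^m(X,q)\,t^m$. *)

From HB Require Import structures.
From mathcomp Require Import all_boot all_order all_algebra all_fingroup.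
Set Implicit Arguments. Unset Strict Implicit. Unset Printing Implicit Defensive.
Import GRing.Theory Num.Theory.
Local Open Scope ring_scope.

Section Rack.
Variables (C : fieldType) (X : finType) (rk : X -> X -> X).

Definition is_cocycle (q : X -> X -> C) : Prop :=
  (forall x y, q x y != 0) /\
  (forall x y z, q x (rk y z) * q y z = q (rk x y) (rk x z) * q x z).

Definition twist (q phi : X -> X -> C) (x y : X) : C :=
  phi x y * (phi (rk x y) x)^-1 * q x y.

Definition twist_equiv (q q' : X -> X -> C) : Prop :=
  exists phi : X -> X -> C, (forall x y, phi x y != 0) /\
    (forall x y, q' x y = twist q phi x y).

(* basis of V^{(x)m}: words w : 'I_m -> X; linear maps are encoded by
   matrices in row convention: A i j = coefficient of basis vector
   (enum_val j) in the image of basis vector (enum_val i); so v |-> v *m A. *)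
Definition tens_dim (m : nat) := #|{ffun 'I_m -> X}|.

Definition braid_at (m : nat) (a b : 'I_m) (w : {ffun 'I_m -> X}) : {ffun 'I_m -> X} :=
  [ffun p => if p == a then rk (w a) (w b) else if p == b then w a else w p].

(* rho_m(sigma_{k+1}) : acts on tensor positions k, k+1 (0-based) by c *)
Definition rho_gen (q : X -> X -> C) (m k : nat) : 'M[C]_(tens_dim m) :=
  match @insub _ (fun i => i < m)%N _ k, @insub _ (fun i => i < m)%N _ k.+1 with
  | Some a, Some b =>
      \matrix_(i, j) (let w := enum_val i in
                      if enum_val j == braid_at a b w then q (w a) (w b) else 0)
  | _, _ => 1
  end.

Definition rho_word (q : X -> X -> C) (m : nat) (w : seq nat) : 'M[C]_(tens_dim m) :=
  foldr (fun k M => M *m rho_gen q m k) 1%:M w.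

End Rack.

(* simple transposition (k k+1) in S_m (0-based); identity if out of range *)
Definition sadj (m k : nat) : 'S_m :=
  match @insub _ (fun i => i < m)%N 'I_m k, @insub _ (fun i => i < m)%N 'I_m k.+1 with
  | Some a, Some b => tperm a b
  | _, _ => 1%g
  end.

Definition word_perm (m : nat) (w : seq nat) : 'S_m := (\prod_(k <- w) sadj m k)%g.

(* Coxeter length = number of inversions *)
Definition ninv (m : nat) (s : 'S_m) : nat :=
  #|[set p : 'I_m * 'I_m | (p.1 < p.2)%N && (s p.2 < s p.1)%N]|.

Definition red_word (m : nat) (s : 'S_m) : seq nat :=
  match [pick t : (ninv s).-tuple 'I_m |
           all (fun k => k.+1 < m)%N (map val t) && (word_perm m (map val t) == s)] with
  | Some t => map val t
  | None => [::]
  end.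

Section Nichols.
Variables (C : fieldType) (X : finType) (rk : X -> X -> X).

(* Q_m = sum_{s in S_m} rho_m(mu(s)), mu = Matsumoto section *)
Definition Qm (q : X -> X -> C) (m : nat) : 'M[C]_(tens_dim X m) :=
  \sum_(s : 'S_m) rho_word rk q m (red_word s).

(* dim B^m(X,q) = dim T^m(V) - dim ker Q_m  (nothing quotiented for m < 2) *)
Definition nichols_dim (q : X -> X -> C) (m : nat) : nat :=
  (tens_dim X m - (if (2 <= m)%N then \rank (kermx (Qm q m)) else 0))%N.
End Nichols.

Definition is_transp (n : nat) (s : 'S_n) : bool :=
  [exists i : 'I_n, exists j : 'I_n, (i != j) && (s == tperm i j)].

Definition Xn (n : nat) := {s : 'S_n | is_transp s}.

Lemma is_transp_conj (n : nat) (x y : 'S_n) :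
  is_transp y -> is_transp (x * y * x^-1)%g.
Proof.
rewrite /is_transp => /existsP [i /existsP [j /andP [nij /eqP ->]]].
have -> : (x * tperm i j * x^-1 = tperm i j ^ x^-1)%g by rewrite conjgE invgK mulgA.
rewrite tpermJ.
apply/existsP; exists ((x^-1)%g i); apply/existsP; exists ((x^-1)%g j).
by rewrite (inj_eq perm_inj) nij eqxx.
Qed.

Definition rk_Xn (n : nat) (x y : Xn n) : Xn n :=
  exist _ (val x * val y * (val x)^-1)%g (is_transp_conj (val x) (valP y)).

Definition minus_one (C : fieldType) (n : nat) : Xn n -> Xn n -> C := fun _ _ => -1.

Definition chi (C : fieldType) (n : nat) (sigma tau : Xn n) : C :=
  if [exists i : 'I_n, exists j : 'I_n,
        [&& (i < j)%N, val tau == tperm i j & (val sigma j < val sigma i)%N]]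
  then -1 else 1.

From mathcomp Require Import all_boot all_order all_algebra all_fingroup.
From mathcomp Require Import ring zify.
Set Implicit Arguments. Unset Strict Implicit. Unset Printing Implicit Defensive.
Import GRing.Theory.
Local Open Scope ring_scope.

(** If [u] assigns to each transposition [(i j)], [i < j], the Clifford element
    [e_i - e_j], then conjugation by [u (i j)] permutes the generators [e_k] by
    [(i j)] up to a global sign, and this gives
    [u (x |> y) u x = - chi(x, y) u x u y].  Normalising the product of the [u]'s
    along a word of [X_n] by a fixed nonzero matrix entry therefore yields a nonzero
    weight [D] on words that picks up the factor [- chi(x, y)] under each braid move
    [x y -> (x |> y) x].  Comparing the two ways of braiding three letters shows
    that [- chi] is a cocycle; [phi(x, y) = D(x y)^-1] twists [-1] into [chi]; and
    the diagonal matrix of word weights intertwines the braid group representations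
    of [-1] and [chi], so the operators [Q_m] have kernels of equal rank. *)

Section Cocycles.
Variables (C : fieldType) (X : finType) (rk : X -> X -> X).

Lemma is_cocycleM (q1 q2 q : X -> X -> C) :
  (forall x y, q x y = q1 x y * q2 x y) ->
  is_cocycle rk q1 -> is_cocycle rk q2 -> is_cocycle rk q.
Proof.
move=> hq [q1_neq0 q1_coc] [q2_neq0 q2_coc]; split=> [x y|x y z].
  by rewrite hq mulf_neq0.
by rewrite !hq mulrACA q1_coc q2_coc mulrACA.
Qed.

Lemma is_cocycle_const (a : C) : a != 0 -> is_cocycle rk (fun _ _ => a).
Proof. by []. Qed.

End Cocycles.

Section BraidWeight.
Variables (C : fieldType) (X : finType) (rk : X -> X -> X).
Variables (c : X -> X -> C) (D : seq X -> C).
Hypothesis D_neq0 : forall l, D l != 0.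
Hypothesis D_braid : forall l1 l2 x y,
  D (l1 ++ [:: rk x y, x & l2]) = c x y * D (l1 ++ [:: x, y & l2]).

Lemma braid_weight_cocycle :
  (forall x y z, rk (rk x y) (rk x z) = rk x (rk y z)) -> is_cocycle rk c.
Proof.
move=> rk_sd; have c_neq0 x y : c x y != 0.
  by have := D_neq0 [:: rk x y; x]; rewrite (D_braid [::] [::]) mulf_eq0 negb_or => /andP[].
split=> // x y z.
(* Carry [:: x; y; z] to [:: rk x (rk y z); rk x y; x] along two chains of braid moves. *)
have E1 := D_braid [:: x] [::] y z.
have E2 := D_braid [::] [:: y] x (rk y z).
have E3 := D_braid [:: rk x (rk y z)] [::] x y.
have F1 := D_braid [::] [:: z] x y.
have F2 := D_braid [:: rk x y] [::] x z.
have F3 := D_braid [::] [:: x] (rk x y) (rk x z).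
rewrite /= rk_sd in E1 E2 E3 F1 F2 F3.
have E : c x y * (c x (rk y z) * (c y z * D [:: x; y; z])) =
         c (rk x y) (rk x z) * (c x z * (c x y * D [:: x; y; z])).
  by rewrite -E1 -E2 -E3 -F1 -F2 -F3.
apply: (mulIf (D_neq0 [:: x; y; z])); apply: (mulfI (c_neq0 x y)).
by rewrite -!mulrA E; ring.
Qed.

Lemma braid_weight_twist (q q' : X -> X -> C) :
  (forall x y, q' x y = c x y * q x y) -> twist_equiv rk q q'.
Proof.
move=> hq'; exists (fun x y => (D [:: x; y])^-1); split=> [x y|x y].
  by rewrite invr_eq0.
by rewrite /twist invrK hq' (D_braid [::] [::]) mulrCA mulVf ?mulr1.
Qed.

Definition word_weight m (w : {ffun 'I_m -> X}) : C := D [seq w i | i <- enum 'I_m].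

Lemma word_weight_braid m (w : {ffun 'I_m -> X}) (a b : 'I_m) :
  val b = (val a).+1 -> word_weight (braid_at rk a b w) = c (w a) (w b) * word_weight w.
Proof.
move=> Eb; have ab : (a == b) = false by rewrite -val_eqE Eb ltn_eqF.
set E := enum 'I_m.
have splitE : E = take a E ++ [:: a, b & drop b.+1 E].
  rewrite -{1}(cat_take_drop a E); congr (_ ++ _).
  have b_lt : (b < size E)%N by rewrite size_enum_ord.
  rewrite (drop_nth a) ?(ltn_trans _ b_lt) ?Eb // -Eb (drop_nth a b_lt).
  by rewrite /E !nth_ord_enum.
rewrite /word_weight -/E splitE !map_cat /= !ffunE eqxx eq_sym ab eqxx -D_braid.
congr (D (_ ++ _ :: _ :: _)); apply/eq_in_map => p.
- move/(map_f val); rewrite map_take val_enum_ord take_iota mem_iota leq_min => /and3P[_ pa _].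
  by rewrite /braid_at ffunE -!val_eqE /= Eb !ltn_eqF // ltnW.
- move/(map_f val); rewrite map_drop val_enum_ord drop_iota mem_iota /= => /andP[bp _].
  by rewrite add0n Eb in bp; rewrite /braid_at ffunE -!val_eqE /= Eb !gtn_eqF // ltnW.
Qed.

Definition weight_mx m : 'M[C]_(tens_dim X m) := diag_mx (\row_i word_weight (enum_val i)).

Lemma weight_mx_unit m : weight_mx m \in unitmx.
Proof.
rewrite unitmxE det_diag unitfE; apply/prodf_neq0 => i _.
by rewrite mxE D_neq0.
Qed.

Section Intertwining.
Variables (q q' : X -> X -> C).
Hypothesis hq' : forall x y, q' x y = c x y * q x y.

Lemma weight_mx_rho_gen m k :
  weight_mx m *m rho_gen rk q' m k = rho_gen rk q m k *m weight_mx m.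
Proof.
rewrite /rho_gen; case: insubP => [a _ Ea|_]; last by rewrite mulmx1 mul1mx.
case: insubP => [b _ Eb|_]; last by rewrite mulmx1 mul1mx.
apply/matrixP => i j; rewrite mul_diag_mx mul_mx_diag !mxE.
case: eqP => [->|_]; last by rewrite mulr0 mul0r.
by rewrite word_weight_braid ?Ea ?Eb // hq'; ring.
Qed.

Lemma weight_mx_rho_word m s :
  weight_mx m *m rho_word rk q' m s = rho_word rk q m s *m weight_mx m.
Proof.
elim: s => [|k s IH] /=; first by rewrite mulmx1 mul1mx.
by rewrite mulmxA IH -!mulmxA weight_mx_rho_gen.
Qed.

Lemma weight_mx_Qm m : weight_mx m *m Qm rk q' m = Qm rk q m *m weight_mx m.
Proof.
rewrite /Qm mulmx_sumr mulmx_suml; apply: eq_bigr => s _.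
exact: weight_mx_rho_word.
Qed.

Lemma braid_weight_nichols_dim m : nichols_dim rk q m = nichols_dim rk q' m.
Proof.
rewrite /nichols_dim; case: ifP => // _; rewrite !mxrank_ker; congr (_ - _)%N.
have W_free : row_free (weight_mx m) by rewrite row_free_unit weight_mx_unit.
have W_full : row_full (weight_mx m) by rewrite row_full_unit weight_mx_unit.
by rewrite -(mxrankMfree _ W_free) -weight_mx_Qm (eqmxMfull _ W_full).
Qed.

End Intertwining.

End BraidWeight.

Section PivotEntry.
Variables (C : fieldType) (p r : nat).

(* The first nonzero entry (0 for the zero matrix): a normalisation of a matrix
   that is only known up to a nonzero scalar. *)
Definition pivot_entry (M : 'M[C]_(p, r)) : C :=
  if [pick ij | M ij.1 ij.2 != 0] is Some ij then M ij.1 ij.2 else 0.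

Lemma pivot_entry_eq0 M : (pivot_entry M == 0) = (M == 0).
Proof.
rewrite /pivot_entry; case: pickP => [ij Mij|M0].
  by rewrite (negbTE Mij); apply/esym/eqP => M0; rewrite M0 mxE eqxx in Mij.
rewrite eqxx; apply/esym/eqP/matrixP => i j; rewrite mxE.
by apply/eqP/negbFE/(M0 (i, j)).
Qed.

Lemma pivot_entryZ a M : a != 0 -> pivot_entry (a *: M) = a * pivot_entry M.
Proof.
move=> a_neq0; rewrite /pivot_entry.
have -> : [pick ij | (a *: M) ij.1 ij.2 != 0] = [pick ij | M ij.1 ij.2 != 0].
  by apply: eq_pick => ij; rewrite mxE mulf_eq0 negb_or a_neq0.
by case: pickP => [ij _|_]; rewrite ?mxE ?mulr0.
Qed.

End PivotEntry.

Section ProjectiveBraidRep.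
Variables (C : fieldType) (X : finType) (rk : X -> X -> X) (N : nat).
Variables (u : X -> 'M[C]_N) (c : X -> X -> C).
Hypothesis N_gt0 : (0 < N)%N.
Hypothesis u_unit : forall x, u x \in unitmx.
Hypothesis u_braid : forall x y, u (rk x y) *m u x = c x y *: (u x *m u y).

Definition word_mx (l : seq X) : 'M[C]_N := foldr (fun x M => u x *m M) 1%:M l.

Lemma word_mx_cat l1 l2 : word_mx (l1 ++ l2) = word_mx l1 *m word_mx l2.
Proof. by elim: l1 => [|x l1 IH] /=; rewrite ?mul1mx // IH mulmxA. Qed.

Lemma word_mx_unit l : word_mx l \in unitmx.
Proof. by elim: l => [|x l IH] /=; rewrite ?unitmx1 // unitmx_mul u_unit. Qed.

Lemma word_mx_neq0 l : word_mx l != 0.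
Proof.
apply/eqP => W0; have := mulmxV (word_mx_unit l).
rewrite W0 mul0mx => /matrixP /(_ (Ordinal N_gt0) (Ordinal N_gt0)).
by rewrite !mxE eqxx => /eqP; rewrite eq_sym oner_eq0.
Qed.

Lemma word_mx_braid l1 l2 x y :
  word_mx (l1 ++ [:: rk x y, x & l2]) = c x y *: word_mx (l1 ++ [:: x, y & l2]).
Proof.
rewrite !word_mx_cat /= [u (rk x y) *m _]mulmxA u_braid.
by rewrite -scalemxAl -scalemxAr -mulmxA.
Qed.

Definition word_pivot (l : seq X) : C := pivot_entry (word_mx l).

Lemma word_pivot_neq0 l : word_pivot l != 0.
Proof. by rewrite pivot_entry_eq0 word_mx_neq0. Qed.

Lemma word_pivot_braid l1 l2 x y :
  word_pivot (l1 ++ [:: rk x y, x & l2]) = c x y * word_pivot (l1 ++ [:: x, y & l2]).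
Proof.
have c_neq0 : c x y != 0.
  apply: contraNneq (word_mx_neq0 (l1 ++ [:: rk x y, x & l2])) => c0.
  by rewrite word_mx_braid c0 scale0r.
by rewrite /word_pivot word_mx_braid pivot_entryZ.
Qed.

End ProjectiveBraidRep.

Section CliffordRelations.
Variables (R : pzRingType) (I : finType) (e : I -> R).
Hypothesis e_sq : forall i, e i * e i = 1.
Hypothesis e_anti : forall i k, i != k -> e i * e k = - (e k * e i).

Lemma clifford_diff_sq i j : i != j -> (e i - e j) * (e i - e j) = 2%:R.
Proof.
move=> ij; rewrite mulrBl !mulrBr !e_sq (e_anti ij).
by rewrite opprK opprB addrACA subrr addr0.
Qed.

Lemma clifford_reflect i j k :
  i != j -> e (tperm i j k) * (e i - e j) = - ((e i - e j) * e k).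
Proof.
move=> ij; case: tpermP => [->|->|ki kj]; rewrite mulrBr mulrBl ?e_sq ?opprB //.
have /eqP ik : i <> k by move/esym.
have /eqP jk : j <> k by move/esym.
by rewrite (e_anti ik) (e_anti jk) opprK addrC.
Qed.

Lemma clifford_reflect_diff i j a b : i != j ->
  (e (tperm i j a) - e (tperm i j b)) * (e i - e j) = - ((e i - e j) * (e a - e b)).
Proof. by move=> ij; rewrite mulrBl !clifford_reflect // mulrBr opprB opprK addrC. Qed.

End CliffordRelations.

Section MonomialMatrices.
Variables (R : pzRingType) (T : finType).

Definition monomx (f : T -> T) (g : T -> R) : 'M[R]_#|T| :=
  \matrix_(a, b) (if enum_val b == f (enum_val a) then g (enum_val a) else 0).

Lemma monomxM f g f' g' :
  monomx f g *m monomx f' g' = monomx (f' \o f) (fun t => g t * g' (f t)).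
Proof.
apply/matrixP => a b; rewrite !mxE (bigD1 (enum_rank (f (enum_val a)))) //=.
rewrite big1 ?addr0 => [|a' a'_neq]; rewrite !mxE.
  by rewrite enum_rankK eqxx; case: eqP; rewrite ?mulr0.
case: eqP => [fa|_]; last by rewrite mul0r.
by rewrite -fa enum_valK eqxx in a'_neq.
Qed.

Lemma eq_monomx f g f' g' : f =1 f' -> g =1 g' -> monomx f g = monomx f' g'.
Proof. by move=> ef eg; apply/matrixP => a b; rewrite !mxE ef eg. Qed.

Lemma monomx1 : monomx id (fun _ => 1) = 1.
Proof. by apply/matrixP => a b; rewrite !mxE (inj_eq enum_val_inj) eq_sym; case: eqP. Qed.

Lemma monomxN f g : - monomx f g = monomx f (fun t => - g t).
Proof. by apply/matrixP => a b; rewrite !mxE; case: eqP; rewrite ?oppr0. Qed.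

End MonomialMatrices.

Section CliffordMatrices.
Variables (C : fieldType) (n : nat).

Definition toggle (k : 'I_n) (S : {set 'I_n}) : {set 'I_n} :=
  [set s | (s == k) (+) (s \in S)].

Lemma toggleK k : involutive (toggle k).
Proof. by move=> S; apply/setP => s; rewrite !inE addbA addbb. Qed.

Lemma toggleC i k S : toggle i (toggle k S) = toggle k (toggle i S).
Proof. by apply/setP => s; rewrite !inE addbCA. Qed.

Lemma odd_card_toggle k S : odd #|toggle k S| = ~~ odd #|S|.
Proof.
case kS: (k \in S).
  have -> : toggle k S = S :\ k.
    by apply/setP => s; rewrite !inE; case: eqP => [->|]; rewrite ?kS.
  by rewrite (cardsD1 k S) kS /= negbK.
have -> : toggle k S = k |: S.
  by apply/setP => s; rewrite !inE; case: eqP => [->|]; rewrite ?kS.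
by rewrite cardsU1 kS.
Qed.

Definition toggle_sign (k : 'I_n) (S : {set 'I_n}) : C :=
  (-1) ^+ odd #|[set s in S | (s < k)%N]|.

Lemma toggle_sign_toggle i k S : i != k ->
  toggle_sign k (toggle i S) = (if (i < k)%N then -1 else 1) * toggle_sign k S.
Proof.
move=> ik; rewrite /toggle_sign; case: ifP => ilt; last first.
  rewrite mul1r; congr (_ ^+ odd _); apply: eq_card => s; rewrite !inE.
  by case: eqP => [->|]; rewrite ?ilt ?andbF.
have -> : [set s in toggle i S | (s < k)%N] = toggle i [set s in S | (s < k)%N].
  by apply/setP => s; rewrite !inE; case: eqP => [->|]; rewrite ?ilt ?andbT.
by rewrite odd_card_toggle; case: odd; rewrite ?mulN1r ?opprK ?expr0 ?expr1.
Qed.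

Lemma toggle_sign_toggle_id k S : toggle_sign k (toggle k S) = toggle_sign k S.
Proof.
rewrite /toggle_sign; congr (_ ^+ odd _); apply: eq_card => s; rewrite !inE.
by case: eqP => [->|]; rewrite ?ltnn ?andbF.
Qed.

(* Jordan-Wigner representation of the Clifford algebra on the subsets of ['I_n]. *)
Definition clifford_mx (k : 'I_n) : 'M[C]_#|{set 'I_n}| :=
  monomx (toggle k) (toggle_sign k).

Lemma clifford_mx_sq k : clifford_mx k * clifford_mx k = 1.
Proof.
rewrite -mulmxE monomxM -monomx1; apply: eq_monomx => S /=; first exact: toggleK.
by rewrite toggle_sign_toggle_id /toggle_sign -signr_addb addbb.
Qed.

Lemma clifford_mx_anti i k : i != k ->
  clifford_mx i * clifford_mx k = - (clifford_mx k * clifford_mx i).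
Proof.
move=> ik; rewrite -!mulmxE !monomxM monomxN; apply: eq_monomx => S /=.
  exact: toggleC.
have ki : k != i by rewrite eq_sym.
rewrite (toggle_sign_toggle _ ik) (toggle_sign_toggle _ ki).
case: ltngtP => [ik_lt|ki_lt|/val_inj ik_eq]; last by rewrite ik_eq eqxx in ik.
- by rewrite mulN1r mul1r mulrN mulrC.
- by rewrite mulN1r mul1r mulrN opprK mulrC.
Qed.

End CliffordMatrices.

Section TranspositionRack.
Variables (C : fieldType) (n : nat).

Lemma rk_Xn_sd (x y z : Xn n) : rk_Xn (rk_Xn x y) (rk_Xn x z) = rk_Xn x (rk_Xn y z).
Proof. by apply: val_inj; rewrite /= !invMg !invgK !mulgA !mulgKV. Qed.

Lemma Xn_tperm (x : Xn n) : exists i j : 'I_n, (i < j)%N /\ val x = tperm i j.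
Proof.
have /existsP[i /existsP[j /andP[ij /eqP xE]]] := valP x; rewrite xE.
case: (ltngtP i j) => [ij_lt|ji_lt|/val_inj ij_eq]; last by rewrite ij_eq eqxx in ij.
- by exists i, j.
- by exists j, i; rewrite tpermC.
Qed.

Lemma tperm_ltn_inj (i j i' j' : 'I_n) : (i < j)%N -> (i' < j')%N ->
  tperm i j = tperm i' j' -> i = i' /\ j = j'.
Proof.
move=> ij_lt ij'_lt E.
have moved k : tperm i j k != k -> (k == i') || (k == j').
  by rewrite E; apply: contraR; rewrite negb_or => /andP[ki kj]; rewrite tpermD // eq_sym.
have i_moved : tperm i j i != i by rewrite tpermL -val_eqE gtn_eqF.
have j_moved : tperm i j j != j by rewrite tpermR -val_eqE ltn_eqF.
case/moved/orP: i_moved => /eqP ii'; case/moved/orP: j_moved => /eqP jj';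
  by rewrite ii' jj' in ij_lt *; try lia.
Qed.

Lemma chi_tperm (sigma tau : Xn n) (i j : 'I_n) : (i < j)%N -> val tau = tperm i j ->
  chi C sigma tau = if (val sigma j < val sigma i)%N then -1 else 1.
Proof.
move=> ij_lt tauE; rewrite /chi; case: existsP => [[i' /existsP[j' /and3P[ij'_lt]]]|none].
  by rewrite tauE => /eqP/(tperm_ltn_inj ij_lt ij'_lt)[-> ->] ->.
case: ifP => // sigma_lt; case: none; exists i; apply/existsP; exists j.
by rewrite ij_lt tauE eqxx sigma_lt.
Qed.

Lemma rk_Xn_tperm (x y : Xn n) (i j a b : 'I_n) :
  val x = tperm i j -> val y = tperm a b ->
  val (rk_Xn x y) = tperm (tperm i j a) (tperm i j b).
Proof. by move=> xE yE; rewrite /= xE yE -tpermJ conjgE tpermV mulgA. Qed.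

(* The pick below always succeeds, by [Xn_tperm]. *)
Definition transp_mx (x : Xn n) : 'M[C]_#|{set 'I_n}| :=
  if [pick ij : 'I_n * 'I_n | (ij.1 < ij.2)%N && (val x == tperm ij.1 ij.2)] is Some ij
  then clifford_mx C ij.1 - clifford_mx C ij.2 else 0.

Lemma transp_mx_tperm (x : Xn n) (i j : 'I_n) : (i < j)%N -> val x = tperm i j ->
  transp_mx x = clifford_mx C i - clifford_mx C j.
Proof.
move=> ij_lt xE; rewrite /transp_mx; case: pickP => [ij /andP[ij'_lt]|none].
  by rewrite xE => /eqP/(tperm_ltn_inj ij_lt ij'_lt)[<- <-].
by have := none (i, j); rewrite /= ij_lt xE eqxx.
Qed.

Lemma transp_mx_rk (x y : Xn n) (a b : 'I_n) : (a < b)%N -> val y = tperm a b ->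
  transp_mx (rk_Xn x y) =
  chi C x y *: (clifford_mx C (val x a) - clifford_mx C (val x b)).
Proof.
move=> ab_lt yE; have [i [j [_ xE]]] := Xn_tperm x.
have rkE := rk_Xn_tperm xE yE; rewrite -xE in rkE.
rewrite (chi_tperm _ ab_lt yE).
case: ltngtP => [xb_lt|xa_lt|/val_inj/perm_inj ab_eq].
- by rewrite tpermC in rkE; rewrite (transp_mx_tperm xb_lt rkE) scaleN1r opprB.
- by rewrite (transp_mx_tperm xa_lt rkE) scale1r.
- by rewrite ab_eq ltnn in ab_lt.
Qed.

Lemma transp_mx_braid (x y : Xn n) :
  transp_mx (rk_Xn x y) *m transp_mx x = (- chi C x y) *: (transp_mx x *m transp_mx y).
Proof.
have [i [j [ij_lt xE]]] := Xn_tperm x; have [a [b [ab_lt yE]]] := Xn_tperm y.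
rewrite (transp_mx_rk _ ab_lt yE) (transp_mx_tperm ij_lt xE) (transp_mx_tperm ab_lt yE) xE.
have ij : i != j by rewrite -val_eqE ltn_eqF.
rewrite -scalemxAl !mulmxE clifford_reflect_diff //.
- by rewrite scalerN scaleNr.
- exact: clifford_mx_sq.
- exact: clifford_mx_anti.
Qed.

Lemma transp_mx_unit (x : Xn n) : (2%:R : C) != 0 -> transp_mx x \in unitmx.
Proof.
move=> two_neq0; have [i [j [ij_lt xE]]] := Xn_tperm x.
have ij : i != j by rewrite -val_eqE ltn_eqF.
have sq : transp_mx x *m transp_mx x = 2%:R%:M.
  rewrite (transp_mx_tperm ij_lt xE) mulmxE clifford_diff_sq //.
  - by rewrite -scalemx1 scaler_nat.
  - exact: clifford_mx_sq.
  - exact: clifford_mx_anti.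
have inv : transp_mx x *m ((2%:R)^-1 *: transp_mx x) = 1%:M.
  by rewrite -scalemxAr sq scale_scalar_mx mulVf.
by case: (mulmx1_unit inv).
Qed.

End TranspositionRack.

Theorem theorem3p8 (C : numClosedFieldType) (n : nat) (hn : (4 <= n)%N) :
  is_cocycle (@rk_Xn n) (@chi C n) /\
  twist_equiv (@rk_Xn n) (@minus_one C n) (@chi C n) /\
  (forall m : nat,
     nichols_dim (@rk_Xn n) (@minus_one C n) m = nichols_dim (@rk_Xn n) (@chi C n) m).
Proof.
have N_gt0 : (0 < #|{set 'I_n}|)%N by apply/card_gt0P; exists set0.
have u_unit (x : Xn n) : transp_mx C x \in unitmx.
  by apply: transp_mx_unit; rewrite Num.Theory.pnatr_eq0.
have D_neq0 := word_pivot_neq0 N_gt0 u_unit.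
have D_braid := word_pivot_braid N_gt0 u_unit (@transp_mx_braid C n).
have chiE (x y : Xn n) : chi C x y = - chi C x y * minus_one C x y by rewrite mulrN1 opprK.
split; last split.
- apply: (is_cocycleM chiE).
    exact: braid_weight_cocycle D_neq0 D_braid (@rk_Xn_sd n).
  by apply: is_cocycle_const; rewrite oppr_eq0 oner_eq0.
- exact (braid_weight_twist D_neq0 D_braid chiE).
- by move=> m; exact (braid_weight_nichols_dim D_neq0 D_braid chiE m).
Qed.
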